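(* Let the unit circle $\partial\mathbb{B}^2=\{w\in\mathbb{C}:|w|=1\}$ be a reflecting mirror, and suppose light rays arrive from the right side (from a source at $+\infty$ on the real axis), travelling parallel to the real axis. Let $f=re^{i\theta}$ be the observation point, where $r>1$ and $0\le\theta\le\frac{\pi}{2}$. If a light ray of this kind is reflected at a point $w$ of the unit circle (obeying the law of reflection: angle of incidence equals angle of reflection with respect to the normal line through $0$ and $w$) and then reaches $f$, then $w$ is a solution of the equation $$ re^{-i\theta}w^4-w^3+w-re^{i\theta}=0. $$
   Context: The incoming ray at the reflection point $w$ lies on the horizontal line through $w$, coming from the direction of the point $w+1$; the law of reflection means that the oriented angle from the ray direction $w+1-w$ to the normal direction $0-w$ equals the oriented angle from $0-w$ to $f-w$. *)

From HB Require Import structures.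
From mathcomp Require Import all_boot all_order all_algebra.
From mathcomp Require Import complex.
From mathcomp Require Import reals trigo.
Set Implicit Arguments. Unset Strict Implicit. Unset Printing Implicit Defensive.
Import Order.TTheory GRing.Theory Num.Theory.
Local Open Scope ring_scope.
Local Open Scope complex_scope.

Definition cexpi (R : realType) (r t : R) : R[i] :=
  (r * cos t) +i* (r * sin t).

(* The oriented angle from u1 to v1 equals the oriented angle from u2 to v2
   (as angles mod 2pi): arg (v1/u1) = arg (v2/u2), i.e. the unit complex
   numbers (v1/u1)/|v1/u1| and (v2/u2)/|v2/u2| coincide.  All four vectors
   are required to be nonzero so that the angles are defined. *)
Definition oriented_angle_eq (R : realType) (u1 v1 u2 v2 : R[i]) : Prop :=
  [/\ u1 != 0, v1 != 0, u2 != 0, v2 != 0 &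
      (v1 / u1) / `|v1 / u1| = (v2 / u2) / `|v2 / u2|].

(* Law of reflection at w on the unit circle for a horizontal ray coming
   from the direction of w+1, reflected towards f:
   angle(w+1-w, 0-w) = angle(0-w, f-w). *)
Definition reflects_to (R : realType) (w f : R[i]) : Prop :=
  oriented_angle_eq (w + 1 - w) (0 - w) (0 - w) (f - w).

From HB Require Import structures.
From mathcomp Require Import all_boot all_order all_algebra.
From mathcomp Require Import complex.
From mathcomp Require Import reals trigo.
From mathcomp Require Import ring.
Set Implicit Arguments. Unset Strict Implicit. Unset Printing Implicit Defensive.
Import Order.TTheory GRing.Theory Num.Theory.
Local Open Scope ring_scope.
Local Open Scope complex_scope.

(* The reflection law at a point [w] of the unit circle says that [f - w]
   points in the direction [w^2], the mirror image of the incoming direction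
   [1] in the normal line through [w]: [f = w + t w^2] with [t = |f - w|].
   Conjugating with [w^* = 1/w] gives [f^* = 1/w + t/w^2], and then
   [f^* w^4 - w^3 + w - f] collapses to [0].  This holds for every
   observation point [f]. *)

Lemma cexpiN (R : realType) (r t : R) : (cexpi r (- t) = (cexpi r t)^*)%R.
Proof. by rewrite /cexpi cosN sinN /= mulrN. Qed.

Lemma conjC_norm1 (C : numClosedFieldType) (w : C) :
  `|w| = 1 -> (w^* = w^-1)%R.
Proof. by move=> w1; rewrite invC_norm w1 expr1n invr1 mul1r. Qed.

Lemma reflects_to_unit_circle (R : realType) (w f : R[i]) :
  `|w| = 1 -> reflects_to w f -> f - w = `|f - w| * w ^+ 2.
Proof.
move=> w1 [_ _ wN0 fwN0].
rewrite [w + 1]addrC addrK !sub0r divr1 normrN w1 divr1 in wN0 *.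
rewrite normrM normrV ?unitfE // normrN w1 invr1 mulr1.
have w0 : w != 0 by rewrite -oppr_eq0.
have fw0 : `|f - w| != 0 by rewrite normr_eq0.
move=> /(congr1 (fun z => z * `|f - w| * - w)).
rewrite mulfVK // divfK ?oppr_eq0 // => fw_eq.
by rewrite -{1}fw_eq mulrAC mulrNN -expr2 mulrC.
Qed.

Lemma reflection_point_eq (C : numClosedFieldType) (w f t : C) :
  `|w| = 1 -> (t^* = t)%R -> f = w + t * w ^+ 2 ->
  (f^* * w ^+ 4 - w ^+ 3 + w - f = 0)%R.
Proof.
move=> w1 tR ->.
have w0 : w != 0 by rewrite -normr_eq0 w1 oner_neq0.
rewrite rmorphD rmorphM rmorphXn /= tR conjC_norm1 //.
by field.
Qed.

Theorem theorem3p1 (R : realType) (r theta : R) (w : R[i])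
  (hr : 1 < r) (ht0 : 0 <= theta) (ht1 : theta <= pi / 2)
  (hw : `|w| = 1)
  (hrefl : reflects_to w (cexpi r theta)) :
  cexpi r (- theta) * w ^+ 4 - w ^+ 3 + w - cexpi r theta = 0.
Proof.
have f_eq : cexpi r theta = w + `|cexpi r theta - w| * w ^+ 2.
  by rewrite -(reflects_to_unit_circle hw hrefl) addrC subrK.
by rewrite cexpiN (@reflection_point_eq R[i] _ _ _ hw (conj_normC _) f_eq).
Qed.
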